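(* Suppose $\|\widehat\theta_t-\theta^*\|_{\Sigma_t}\le\beta_t$ for all $t\in[T]$ (with $\|\theta^*\|_2\le L_\theta$). Then for each episode $k$ of \texttt{UCMNLK} and all $(s,a)\in\mathcal S\times\mathcal A$: $1/(1-\gamma)\ge V_k(s)\ge V^*(s)$ and $1/(1-\gamma)\ge Q_k(s,a)\ge Q^*(s,a)$.
   Context: Setting as for \texttt{UCMNLK}: finite $\mathcal S,\mathcal A$, reward $r\in[0,1]$, true transitions $p(s'\mid s,a,\theta^* )$ of MNL form $p(s'\mid s,a,\theta)=\exp(\varphi(s,a,s')^\top\theta)/\sum_{s''\in\mathcal S_{s,a}}\exp(\varphi(s,a,s'')^\top\theta)$ on known reachable sets $\mathcal S_{s,a}$. $\widehat\theta_t,\Sigma_t$ are the online estimator's iterates; $\mathcal P_t$ is the set of $p\in[0,1]^{\mathcal S\times\mathcal A\times\mathcal S}$ with $\sum_{s'\in\mathcal S_{s,a}}p_{s,a,s'}=1$ and $\sum_{s'\in\mathcal S_{s,a}}|p_{s,a,s'}-p(s'\mid s,a,\widehat\theta_t)|\le\beta_t\sum_{s'}p(s'\mid s,a,\widehat\theta_t)\|\varphi(s,a,s')-\sum_{s''}p(s''\mid s,a,\widehat\theta_t)\varphi(s,a,s'')\|_{\Sigma_t^{-1}}+3\beta_t^2\max_{s'}\|\varphi(s,a,s')\|^2_{\Sigma_t^{-1}}$ for all $(s,a)$. For episode $k$ starting at $t_k$, $Q_k$ is the output of \texttt{DEVI}$(\gamma,\mathcal P_{t_k},N)$: $Q^{(0)}\equiv1/(1-\gamma)$,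 $V^{(n-1)}(s)=\max_aQ^{(n-1)}(s,a)$, $Q^{(n)}(s,a)=r(s,a)+\gamma\max_{p\in\mathcal P_{t_k}}\sum_{s'\in\mathcal S_{s,a}}p_{s,a,s'}V^{(n-1)}(s')$, $Q_k=Q^{(N)}$; $V_k(s)=\max_aQ_k(s,a)$. $V^*,Q^*$ are the optimal value and action-value functions of the discounted MDP with discount $\gamma$ under the true transitions, satisfying $Q^*(s,a)=r(s,a)+\gamma\sum_{s'}p(s'\mid s,a,\theta^* )V^*(s')$, $V^*(s)=\max_aQ^*(s,a)$. *)

From HB Require Import structures.
From mathcomp Require Import all_boot all_order all_algebra.
From mathcomp Require Import all_classical all_reals all_analysis.
Set Implicit Arguments. Unset Strict Implicit. Unset Printing Implicit Defensive.
Import Order.TTheory GRing.Theory Num.Theory.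
Local Open Scope ring_scope.
Local Open Scope classical_set_scope.

Section UCMNLK.
Variables (R : realType) (S A : finType) (d : nat).

Definition ip (x y : 'cV[R]_d) : R := (x^T *m y) 0 0.

Definition wnorm (M : 'M[R]_d) (x : 'cV[R]_d) : R := Num.sqrt ((x^T *m M *m x) 0 0).

Definition posdef (M : 'M[R]_d) : Prop :=
  M^T = M /\ forall x : 'cV[R]_d, x != 0 -> 0 < (x^T *m M *m x) 0 0.

Variables (phi : S -> A -> S -> 'cV[R]_d) (Sr : S -> A -> {set S}).

Definition mnl (theta : 'cV[R]_d) (s : S) (a : A) (s' : S) : R :=
  if s' \in Sr s a then
    expR (ip (phi s a s') theta) /
    \sum_(s'' in Sr s a) expR (ip (phi s a s'') theta)
  else 0.

Definition conf_set (thetahat : 'cV[R]_d) (Sigma : 'M[R]_d) (beta : R)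
  : set (S -> A -> S -> R) :=
  [set p | (forall s a s', 0 <= p s a s' <= 1) /\
    forall s a,
      \sum_(s' in Sr s a) p s a s' = 1 /\
      \sum_(s' in Sr s a) `|p s a s' - mnl thetahat s a s'|
      <= beta * \sum_(s' in Sr s a) mnl thetahat s a s' *
                 wnorm (invmx Sigma)
                   (phi s a s' - \sum_(s'' in Sr s a) mnl thetahat s a s'' *: phi s a s'')
         + 3 * beta ^+ 2 *
           \big[Num.max/0]_(s' in Sr s a) (wnorm (invmx Sigma) (phi s a s')) ^+ 2].

(* max over actions (A nonempty, witnessed by a0) *)
Definition vmax (a0 : A) (Q : S -> A -> R) (s : S) : R :=
  \big[Num.max/Q s a0]_(a : A) Q s a.

Fixpoint devi (a0 : A) (r : S -> A -> R) (gamma : R) (P : set (S -> A -> S -> R))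
  (n : nat) : S -> A -> R :=
  match n with
  | 0 => fun _ _ => (1 - gamma)^-1
  | n'.+1 => fun s a =>
      r s a + gamma *
        sup [set x | exists2 p, P p &
               x = \sum_(s' in Sr s a) p s a s' * vmax a0 (devi a0 r gamma P n') s']
  end.

End UCMNLK.

From HB Require Import structures.
From mathcomp Require Import all_boot all_order all_algebra.
From mathcomp Require Import all_classical all_reals all_analysis.
From mathcomp Require Import ring lra.
Set Implicit Arguments. Unset Strict Implicit. Unset Printing Implicit Defensive.
Import Order.TTheory GRing.Theory Num.Theory.
Local Open Scope ring_scope.

(* Optimism only needs the true kernel p(.|., theta_star) to lie in the
   confidence set P_t: extended value iteration over a set of kernels containing
   the true one dominates the true Bellman operator, and its iterates never
   exceed 1/(1-gamma), which also bounds Q*; so Q* <= Q^(n) <= 1/(1-gamma) by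
   induction on n.
   Membership is a perturbation bound for the softmax: p(.|theta_star) is the
   exponential tilt of q = p(.|thetahat) by z_i = phi_i^T (theta_star - thetahat),
   and tilting is invariant under shifts, so z may be centred at its q-mean m.
   Writing |x| = x + 2 max(-x, 0) and using e^u >= 1 + u gives
   sum_i |tilt_i - q_i| <= sum_i q_i |z_i - m| + 2 (1 - 1/Z) for the normaliser Z,
   and a quadratic upper bound on exp gives 1 - 1/Z <= 3/2 max_i z_i^2.  Both
   terms are then bounded through |x^T y| <= ||x||_(Sigma^-1) ||y||_Sigma and
   ||theta_star - thetahat||_Sigma <= beta. *)

Section ExponentialTilt.
Variable R : realType.

Lemma expR_le_inv_sqr (u : R) : u < 2 -> expR u <= 4 / (2 - u) ^+ 2.
Proof.
move=> lt_u2.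
have e_half : expR (u / 2) * (1 - u / 2) <= 1.
  rewrite -[leRHS](expRxMexpNx_1 (u / 2)) ler_pM2l ?expR_gt0 //.
  by have := expR_ge1Dx (- (u / 2)); lra.
have sq_pos : 0 < (2 - u) ^+ 2 by rewrite exprn_gt0 //; lra.
have -> : expR u = expR (u / 2) ^+ 2 by rewrite -expRM_natr; congr expR; field.
rewrite ler_pdivlMr //.
have -> : expR (u / 2) ^+ 2 * (2 - u) ^+ 2 = 4 * (expR (u / 2) * (1 - u / 2)) ^+ 2.
  by field.
have : 0 <= expR (u / 2) * (1 - u / 2) by apply: mulr_ge0; [exact: expR_ge0 | lra].
nra.
Qed.

(* The linear part is damped by [1 - 3 a^2 / 2] so that, averaged against a
   centred [u] of variance at most [a^2], the right-hand side is at most 1. *)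
Lemma expR_le_quadratic (a u : R) : 0 <= a -> 3 * a ^+ 2 < 2 -> u <= 2 * a ->
  (1 - 3 / 2 * a ^+ 2) * expR u <= (1 - 3 / 2 * a ^+ 2) * (1 + u) + 3 / 2 * u ^+ 2.
Proof.
move=> a_ge0 a_small le_u2a.
have lt_u2 : u < 2 by nra.
set c := 1 - 3 / 2 * a ^+ 2.
have c_gt0 : 0 < c by rewrite /c; lra.
apply: (le_trans (y := c * (4 / (2 - u) ^+ 2))).
  by rewrite ler_pM2l // expR_le_inv_sqr.
have sq_pos : 0 < (2 - u) ^+ 2 by rewrite exprn_gt0 //; lra.
rewrite mulrA ler_pdivrMr // -subr_ge0.
have -> : (c * (1 + u) + 3 / 2 * u ^+ 2) * (2 - u) ^+ 2 - c * 4 =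
    u ^+ 2 * (3 / 2 * (2 - u) ^+ 2 - c * (3 - u)) by rewrite /c; field.
apply: mulr_ge0; first exact: sqr_ge0.
have cubic_ge0 : 0 <= 3 - 10 * a + 21 / 2 * a ^+ 2 - 3 * a ^+ 3.
  have -> : 3 - 10 * a + 21 / 2 * a ^+ 2 - 3 * a ^+ 3 =
      1 / 9 + (a - 2 / 3) ^+ 2 * (9 / 2 - 3 * (a - 2 / 3)) by field.
  by apply: addr_ge0; [lra | apply: mulr_ge0; [exact: sqr_ge0 | nra]].
have -> : 3 / 2 * (2 - u) ^+ 2 - c * (3 - u) =
    (3 - 10 * a + 21 / 2 * a ^+ 2 - 3 * a ^+ 3)
    + (2 * a - u) * (6 - c - 3 / 2 * (u + 2 * a)) by rewrite /c; field.
by apply: addr_ge0 => //; apply: mulr_ge0; rewrite /c; nra.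
Qed.

Lemma normr_tilt_sub_le (q u w : R) : 0 <= q -> 0 < w -> w <= 1 ->
  `|q * expR u * w - q| <= (q * expR u * w - q) + 2 * q * (1 - w) + q * (`|u| - u).
Proof.
move=> q_ge0 w_gt0 w_le1.
have lin_le : q * (1 + u) * w <= q * expR u * w.
  by rewrite ler_wpM2r ?ler_wpM2l ?expR_ge1Dx // ltW.
have qw_ge0 : 0 <= q * w by rewrite mulr_ge0 // ltW.
have q1w_ge0 : 0 <= q * (1 - w) by rewrite mulr_ge0 // subr_ge0.
rewrite ler_norml; apply/andP; split; last first.
  have : 0 <= q * (`|u| - u) by rewrite mulr_ge0 // subr_ge0 ler_norm.
  lra.
case: (lerP 0 u) => [u_ge0 | u_lt0].
  rewrite (ger0_norm u_ge0).
  have : 0 <= q * w * u by rewrite mulr_ge0.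
  nra.
rewrite (ltr0_norm u_lt0).
have : 0 <= q * (- u) * (1 - w) by rewrite !mulr_ge0 // ?subr_ge0 // oppr_ge0 ltW.
nra.
Qed.

Definition tilt (I : finType) (J : {set I}) (q u : I -> R) (i : I) : R :=
  q i * expR (u i) / \sum_(j in J) q j * expR (u j).

Variables (I : finType) (J : {set I}) (q : I -> R).
Hypothesis q_ge0 : forall i, i \in J -> 0 <= q i.
Hypothesis q_sum1 : \sum_(i in J) q i = 1.

Lemma mean_le (f : I -> R) (b : R) : (forall i, i \in J -> f i <= b) ->
  \sum_(i in J) q i * f i <= b.
Proof.
move=> f_le; rewrite -[leRHS]mul1r -q_sum1 mulr_suml.
by apply: ler_sum => i Ji; rewrite ler_wpM2l ?q_ge0 ?f_le.
Qed.

Lemma tilt_shift (u : I -> R) (c : R) i :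
  tilt J q (fun j => u j + c) i = tilt J q u i.
Proof.
rewrite /tilt; under eq_bigr do rewrite expRD mulrA.
rewrite -mulr_suml expRD mulrA invfM mulrACA mulfV ?mulr1 //.
by rewrite gt_eqF ?expR_gt0.
Qed.

Lemma tilt_normalizer_ge1 (u : I -> R) : \sum_(i in J) q i * u i = 0 ->
  1 <= \sum_(i in J) q i * expR (u i).
Proof.
move=> u_centred; rewrite -q_sum1 -[leLHS]addr0 -[X in _ + X <= _]u_centred -big_split /=.
apply: ler_sum => i Ji; rewrite -[X in X + _]mulr1 -mulrDr ler_wpM2l ?q_ge0 //.
exact: expR_ge1Dx.
Qed.

Lemma tilt_normalizer_inv_ge (u : I -> R) (A : R) :
  \sum_(i in J) q i * u i = 0 -> \sum_(i in J) q i * u i ^+ 2 <= A ->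
  (forall i, i \in J -> u i <= 2 * Num.sqrt A) ->
  1 - (\sum_(i in J) q i * expR (u i))^-1 <= 3 / 2 * A.
Proof.
move=> u_centred var_le u_le.
set Z := \sum_(i in J) q i * expR (u i).
have Z_ge1 : 1 <= Z by exact: tilt_normalizer_ge1.
have Zinv_gt0 : 0 < Z^-1 by rewrite invr_gt0; lra.
have [A_small | A_large] := ltrP (3 * A) 2; last by lra.
have A_ge0 : 0 <= A.
  by apply: le_trans var_le; apply: sumr_ge0 => i Ji; rewrite mulr_ge0 ?q_ge0 ?sqr_ge0.
have sqrtA2 : Num.sqrt A ^+ 2 = A by rewrite sqr_sqrtr.
have cZ_le1 : (1 - 3 / 2 * A) * Z <= 1.
  rewrite /Z mulr_sumr; apply: (le_trans (y := \sum_(i in J)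
      ((1 - 3 / 2 * A) * q i + (1 - 3 / 2 * A) * (q i * u i) + 3 / 2 * (q i * u i ^+ 2)))).
    apply: ler_sum => i Ji.
    have := expR_le_quadratic (sqrtr_ge0 A) _ (u_le i Ji); rewrite sqrtA2 => /(_ A_small).
    by have := q_ge0 Ji; nra.
  rewrite !big_split /= -!mulr_sumr q_sum1 u_centred.
  have : 3 / 2 * \sum_(i in J) q i * u i ^+ 2 <= 3 / 2 * A by rewrite ler_wpM2l.
  lra.
have -> : 1 - Z^-1 = (Z - 1) / Z by field; lra.
by rewrite ler_pdivrMr; nra.
Qed.

Lemma l1_tilt_le_centred (u : I -> R) (A : R) :
  \sum_(i in J) q i * u i = 0 -> \sum_(i in J) q i * u i ^+ 2 <= A ->
  (forall i, i \in J -> u i <= 2 * Num.sqrt A) ->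
  \sum_(i in J) `|tilt J q u i - q i| <= \sum_(i in J) q i * `|u i| + 3 * A.
Proof.
move=> u_centred var_le u_le.
have := tilt_normalizer_inv_ge u_centred var_le u_le.
have := tilt_normalizer_ge1 u_centred.
rewrite /tilt; set Z := \sum_(i in J) q i * expR (u i) => Z_ge1 Zinv_ge.
have Zinv_gt0 : 0 < Z^-1 by rewrite invr_gt0; lra.
have Zinv_le1 : Z^-1 <= 1 by rewrite invf_le1 //; lra.
have tilt_sub_le i : i \in J -> _ :=
  fun Ji => normr_tilt_sub_le (u i) (q_ge0 Ji) Zinv_gt0 Zinv_le1.
apply: le_trans (ler_sum _ tilt_sub_le) _.
rewrite (eq_bigr (fun i => Z^-1 * (q i * expR (u i)) - q i + 2 * (1 - Z^-1) * q i
    + q i * `|u i| - q i * u i)); last by move=> i _; ring.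
rewrite sumrB !big_split /= sumrN -!mulr_sumr q_sum1 u_centred -/Z.
by rewrite mulVf ?gt_eqF //; lra.
Qed.

Lemma l1_tilt_le (z : I -> R) (A : R) : (forall i, i \in J -> z i ^+ 2 <= A) ->
  \sum_(i in J) `|tilt J q z i - q i|
    <= \sum_(i in J) q i * `|z i - \sum_(j in J) q j * z j| + 3 * A.
Proof.
move=> z_le; set m := \sum_(j in J) q j * z j.
have z2_mean_le : \sum_(i in J) q i * z i ^+ 2 <= A by exact: (@mean_le (fun i => z i ^+ 2)).
have A_ge0 : 0 <= A.
  by apply: le_trans z2_mean_le; apply: sumr_ge0 => i Ji; rewrite mulr_ge0 ?q_ge0 ?sqr_ge0.
have normz_le i : i \in J -> `|z i| <= Num.sqrt A.
  by move=> Ji; rewrite -sqrtr_sqr ler_wsqrtr ?z_le.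
have normm_le : `|m| <= Num.sqrt A.
  apply: le_trans (ler_norm_sum _ _ _) _.
  rewrite (eq_bigr (fun i => q i * `|z i|)) => [|i Ji]; last by rewrite normrM ger0_norm ?q_ge0.
  exact: mean_le.
have -> : \sum_(i in J) `|tilt J q z i - q i| =
    \sum_(i in J) `|tilt J q (fun j => z j - m) i - q i|.
  apply: eq_bigr => i _; rewrite -(tilt_shift (fun j => z j - m) m).
  by congr (`|tilt _ _ _ _ - _|); apply/funext => j; rewrite subrK.
apply: l1_tilt_le_centred => [|| i Ji].
- rewrite (eq_bigr (fun i => q i * z i - m * q i)); last by move=> i _; ring.
  by rewrite sumrB -mulr_sumr q_sum1 mulr1 subrr.
- rewrite (eq_bigr (fun i => q i * z i ^+ 2 - 2 * m * (q i * z i) + m ^+ 2 * q i));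
    last by move=> i _; ring.
  rewrite big_split sumrB /= -!mulr_sumr q_sum1 -/m.
  by have := sqr_ge0 m; lra.
- have := normz_le i Ji; have := ler_norm (z i); have := ler_norm (- m).
  rewrite normrN; lra.
Qed.

End ExponentialTilt.

Section DualNorms.
Variables (R : realType) (d : nat).

Definition bform (M : 'M[R]_d) (x y : 'cV[R]_d) : R := (x^T *m M *m y) 0 0.

Lemma ipBr (x y z : 'cV[R]_d) : ip x (y - z) = ip x y - ip x z.
Proof. by rewrite /ip mulmxBr !mxE. Qed.

Lemma ip_sumBl (I : finType) (J : {set I}) (x v : 'cV[R]_d) (c : I -> R)
    (f : I -> 'cV[R]_d) :
  ip (x - \sum_(j in J) c j *: f j) v = ip x v - \sum_(j in J) c j * ip (f j) v.
Proof.
rewrite /ip linearB linear_sum /= mulmxBl mulmx_suml [LHS]mxE [X in _ + X]mxE summxE.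
congr (_ - _).
by apply: eq_bigr => j _; rewrite linearZ /= -scalemxAl mxE.
Qed.

Lemma wnormN (M : 'M[R]_d) (v : 'cV[R]_d) : wnorm M (- v) = wnorm M v.
Proof. by rewrite /wnorm (linearN trmx) /= mulNmx mulNmx mulmxN opprK. Qed.

Lemma posdef_unitmx (M : 'M[R]_d) : posdef M -> M \in unitmx.
Proof.
move=> [_ M_pos]; rewrite unitmxE unitfE; apply/negP => /det0P [v v_neq0 vM0].
have := M_pos v^T; rewrite trmx_eq0 v_neq0 trmxK vM0 mul0mx mxE => /(_ isT).
by rewrite ltxx.
Qed.

Section PositiveDefinite.
Variable M : 'M[R]_d.
Hypothesis M_posdef : posdef M.

Lemma bformC (x y : 'cV[R]_d) : bform M x y = bform M y x.
Proof.
case: M_posdef => M_sym _.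
have entry_tr (A : 'M[R]_1) : A 0 0 = A^T 0 0 by rewrite mxE.
by rewrite /bform entry_tr !trmx_mul trmxK M_sym mulmxA.
Qed.

Lemma bform_ge0 (x : 'cV[R]_d) : 0 <= bform M x x.
Proof.
case: M_posdef => _ M_pos; have [->|x_neq0] := eqVneq x 0; last exact/ltW/M_pos.
by rewrite /bform mulmx0 mxE.
Qed.

Lemma bform_subZ (x y : 'cV[R]_d) (t : R) :
  bform M (x - t *: y) (x - t *: y)
    = bform M x x - 2 * t * bform M x y + t ^+ 2 * bform M y y.
Proof.
have -> : bform M (x - t *: y) (x - t *: y)
    = bform M x x - t * bform M x y - t * bform M y x + t ^+ 2 * bform M y y.
  rewrite /bform; have -> : (x - t *: y)^T = x^T - t *: y^T by rewrite linearB linearZ.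
  by rewrite !mulmxBl !mulmxBr -!scalemxAl -!scalemxAr !mxE; ring.
by rewrite (bformC y x); ring.
Qed.

Lemma bform_cauchy_schwarz (x y : 'cV[R]_d) :
  bform M x y ^+ 2 <= bform M x x * bform M y y.
Proof.
have [->|y_neq0] := eqVneq y 0.
  by rewrite /bform !mulmx0 mxE expr0n mulr0.
have yy_gt0 : 0 < bform M y y by case: M_posdef => _; apply.
have := bform_ge0 (x - bform M x y / bform M y y *: y); rewrite bform_subZ.
have -> : bform M x x - 2 * (bform M x y / bform M y y) * bform M x y
    + (bform M x y / bform M y y) ^+ 2 * bform M y y
    = (bform M x x * bform M y y - bform M x y ^+ 2) / bform M y y.
  by field; rewrite gt_eqF.
by rewrite pmulr_lge0 ?invr_gt0 // subr_ge0.
Qed.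

Lemma normr_ip_le_wnorm (x y : 'cV[R]_d) :
  `|ip x y| <= wnorm (invmx M) x * wnorm M y.
Proof.
have M_unit := posdef_unitmx M_posdef; case: (M_posdef) => M_sym _.
set x' := invmx M *m x.
have x'M : x'^T *m M = x^T by rewrite trmx_mul trmx_inv M_sym -mulmxA mulVmx ?mulmx1.
have -> : ip x y = bform M x' y by rewrite /bform x'M.
have -> : wnorm (invmx M) x = Num.sqrt (bform M x' x') by rewrite /bform x'M mulmxA.
rewrite -sqrtrM ?bform_ge0 // -sqrtr_sqr ler_wsqrtr //.
exact: bform_cauchy_schwarz.
Qed.

End PositiveDefinite.
End DualNorms.

Section MultinomialLogit.
Variables (R : realType) (S A : finType) (d : nat).
Variables (phi : S -> A -> S -> 'cV[R]_d) (Sr : S -> A -> {set S}).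
Local Notation mnl := (mnl phi Sr).
Implicit Types (th ts : 'cV[R]_d).

Lemma sumr_expR_gt0 (I : finType) (J : {set I}) (g : I -> R) : (0 < #|J|)%N ->
  0 < \sum_(j in J) expR (g j).
Proof.
rewrite card_gt0 => /set0Pn [i Ji]; rewrite (bigD1 i) //= ltr_pwDl ?expR_gt0 //.
by apply: sumr_ge0 => j _; exact: expR_ge0.
Qed.

Lemma mnl_ge0 th s a s' : 0 <= mnl th s a s'.
Proof.
rewrite /mnl; case: ifP => // _.
by rewrite divr_ge0 ?expR_ge0 ?sumr_ge0 // => j _; exact: expR_ge0.
Qed.

Lemma mnl_le1 th s a s' : mnl th s a s' <= 1.
Proof.
rewrite /mnl; case: ifPn => // Js'.
have Sr_neq0 : (0 < #|Sr s a|)%N by apply/card_gt0P; exists s'.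
have Z_gt0 := sumr_expR_gt0 (fun j => ip (phi s a j) th) Sr_neq0.
rewrite ler_pdivrMr // mul1r (bigD1 s') //= lerDl.
by apply: sumr_ge0 => j _; exact: expR_ge0.
Qed.

Lemma mnl_sum1 th s a : (0 < #|Sr s a|)%N -> \sum_(s' in Sr s a) mnl th s a s' = 1.
Proof.
move=> Sr_neq0; have Z_gt0 := sumr_expR_gt0 (fun j => ip (phi s a j) th) Sr_neq0.
rewrite (eq_bigr (fun s' => expR (ip (phi s a s') th) /
    \sum_(j in Sr s a) expR (ip (phi s a j) th))) => [|s' Js']; last by rewrite /mnl Js'.
by rewrite -mulr_suml mulfV ?gt_eqF.
Qed.

Lemma sum_mnl_reachable th s a (f : S -> R) :
  \sum_(s' : S) mnl th s a s' * f s' = \sum_(s' in Sr s a) mnl th s a s' * f s'.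
Proof.
rewrite (bigID (mem (Sr s a))) /= addrC big1 ?add0r // => s' /negbTE Js'.
by rewrite /mnl Js' mul0r.
Qed.

Lemma mnl_tilt th ts s a s' : s' \in Sr s a ->
  mnl ts s a s' = tilt (Sr s a) (mnl th s a) (fun j => ip (phi s a j) (ts - th)) s'.
Proof.
move=> Js'; set Zh := \sum_(j in Sr s a) expR (ip (phi s a j) th).
have Sr_neq0 : (0 < #|Sr s a|)%N by apply/card_gt0P; exists s'.
have Zh_gt0 : 0 < Zh by exact: sumr_expR_gt0.
have tilted j : j \in Sr s a ->
    mnl th s a j * expR (ip (phi s a j) (ts - th)) = expR (ip (phi s a j) ts) / Zh.
  move=> Jj; rewrite /mnl Jj ipBr expRB -/Zh.
  by field; rewrite !gt_eqF ?expR_gt0.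
rewrite /tilt tilted // (eq_bigr _ tilted) -mulr_suml /mnl Js'.
have := sumr_expR_gt0 (fun j => ip (phi s a j) ts) Sr_neq0.
by move=> Zt_gt0; field; rewrite !gt_eqF.
Qed.

Lemma conf_set_stochastic th (M : 'M[R]_d) (beta : R) p :
  conf_set phi Sr th M beta p ->
  (forall s a s', 0 <= p s a s') /\ forall s a, \sum_(s' in Sr s a) p s a s' = 1.
Proof.
case=> p_bound p_sum; split=> [s a s'|s a]; first by case/andP: (p_bound s a s').
by case: (p_sum s a).
Qed.

Lemma mnl_in_conf_set th ts (M : 'M[R]_d) (beta : R) :
  (forall s a, (0 < #|Sr s a|)%N) -> posdef M -> wnorm M (th - ts) <= beta ->
  conf_set phi Sr th M beta (mnl ts).
Proof.
move=> Sr_neq0 M_posdef dist_le; split=> [s a s'|s a].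
  by rewrite mnl_ge0 mnl_le1.
split; first exact: mnl_sum1.
set J := Sr s a; set q := mnl th s a.
set z := fun j => ip (phi s a j) (ts - th).
set Mx := \big[Num.max/0]_(j in J) wnorm (invmx M) (phi s a j) ^+ 2.
have dist_le_sym : wnorm M (ts - th) <= beta by rewrite -opprB wnormN.
have beta_ge0 : 0 <= beta by apply: le_trans dist_le; exact: sqrtr_ge0.
have normz_le j : `|z j| <= wnorm (invmx M) (phi s a j) * beta.
  apply: le_trans (normr_ip_le_wnorm M_posdef _ _) _.
  by rewrite ler_wpM2l ?sqrtr_ge0.
have z2_le j : j \in J -> z j ^+ 2 <= beta ^+ 2 * Mx.
  move=> Jj; apply: (@le_trans _ _ ((wnorm (invmx M) (phi s a j) * beta) ^+ 2)).
    rewrite -[leLHS]real_normK ?num_real // lerXn2r ?nnegrE ?normr_ge0 ?normz_le //.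
    by rewrite mulr_ge0 ?sqrtr_ge0.
  rewrite exprMn mulrC ler_wpM2l ?sqr_ge0 //.
  exact: (le_bigmax_cond _ (fun j => wnorm (invmx M) (phi s a j) ^+ 2) Jj).
rewrite (eq_bigr (fun j => `|tilt J q z j - q j|)) => [|j Jj]; last by rewrite (mnl_tilt th).
have q_ge0 j : j \in J -> 0 <= q j by move=> _; exact: mnl_ge0.
apply: le_trans (l1_tilt_le q_ge0 (mnl_sum1 th (Sr_neq0 s a)) z2_le) _.
rewrite mulrA lerD2r mulr_sumr; apply: ler_sum => j Jj.
rewrite mulrCA ler_wpM2l ?mnl_ge0 //.
rewrite /z /= -ip_sumBl mulrC.
by apply: le_trans (normr_ip_le_wnorm M_posdef _ _) _; rewrite ler_wpM2l ?sqrtr_ge0.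
Qed.

End MultinomialLogit.

Local Open Scope classical_set_scope.

Section ActionMax.
Variables (R : realType) (S A : finType) (a0 : A).
Implicit Types (Q : S -> A -> R) (s : S).

Lemma le_vmax Q s a : Q s a <= vmax a0 Q s.
Proof. exact: (le_bigmax (Q s a0) (Q s) a). Qed.

Lemma vmax_le Q s x : (forall a, Q s a <= x) -> vmax a0 Q s <= x.
Proof. by move=> Q_le; apply: bigmax_le => // a _; exact: Q_le. Qed.

Lemma le_vmax2 Q1 Q2 s : (forall a, Q1 s a <= Q2 s a) -> vmax a0 Q1 s <= vmax a0 Q2 s.
Proof. by move=> le_Q; apply: vmax_le => a; apply: le_trans (le_Q a) (le_vmax _ _ _). Qed.

End ActionMax.

Section Optimism.
Variables (R : realType) (S A : finType) (a0 : A) (Sr : S -> A -> {set S}).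
Variables (r : S -> A -> R) (gamma : R) (P : set (S -> A -> S -> R)).
Variables (pstar : S -> A -> S -> R) (Qstar : S -> A -> R) (Vstar : S -> R).
Hypothesis r_bound : forall s a, 0 <= r s a <= 1.
Hypothesis gamma_ge0 : 0 <= gamma.
Hypothesis gamma_lt1 : gamma < 1.
Hypothesis P_stochastic : forall p, P p ->
  (forall s a s', 0 <= p s a s') /\ forall s a, \sum_(s' in Sr s a) p s a s' = 1.
Hypothesis P_pstar : P pstar.
Hypothesis Qstar_bellman : forall s a,
  Qstar s a = r s a + gamma * \sum_(s' in Sr s a) pstar s a s' * Vstar s'.
Hypothesis Vstar_max : forall s, Vstar s = vmax a0 Qstar s.

Local Notation Q := (devi Sr a0 r gamma P).

Lemma mean_kernel_le p s a (f : S -> R) (x : R) : P p -> (forall s', f s' <= x) ->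
  \sum_(s' in Sr s a) p s a s' * f s' <= x.
Proof.
by move=> /P_stochastic [p_ge0 p_sum1] f_le; apply: mean_le => // s' _; exact: p_ge0.
Qed.

Lemma Qstar_le s a : Qstar s a <= (1 - gamma)^-1.
Proof.
set M := \big[Num.max/Qstar s a]_(x : S * A) Qstar x.1 x.2.
have Qstar_leM s' a' : Qstar s' a' <= M by exact: (le_bigmax _ _ (s', a')).
have Qstar_le1DM s' a' : Qstar s' a' <= 1 + gamma * M.
  rewrite Qstar_bellman lerD ?ler_wpM2l //; first by case/andP: (r_bound s' a').
  by apply: mean_kernel_le => // s''; rewrite Vstar_max; apply: vmax_le.
have M_le : M <= 1 + gamma * M by apply: bigmax_le => [|[s' a'] _]; exact: Qstar_le1DM.
apply: le_trans (Qstar_leM s a) _.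
by rewrite -div1r ler_pdivlMr ?subr_gt0 //; nra.
Qed.

Lemma devi_optimistic n s a : Qstar s a <= Q n s a <= (1 - gamma)^-1.
Proof.
elim: n s a => [|n IHn] s a; first by rewrite /= lexx andbT Qstar_le.
set V := vmax a0 (Q n).
have V_bound s' : Vstar s' <= V s' <= (1 - gamma)^-1.
  rewrite Vstar_max le_vmax2 => [|a']; last by case/andP: (IHn s' a').
  by apply: vmax_le => a'; case/andP: (IHn s' a').
set X := [set x | exists2 p, P p & x = \sum_(s' in Sr s a) p s a s' * V s'].
have X_le : ubound X (1 - gamma)^-1.
  by move=> _ [p Pp ->]; apply: mean_kernel_le => // s'; case/andP: (V_bound s').
have X_pstar : X (\sum_(s' in Sr s a) pstar s a s' * V s') by exists pstar.
apply/andP; split; rewrite /=.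
  rewrite Qstar_bellman lerD2l ler_wpM2l //.
  apply: le_trans (ub_le_sup (ex_intro _ _ X_le) X_pstar).
  have [pstar_ge0 _] := P_stochastic P_pstar.
  by apply: ler_sum => s' _; rewrite ler_wpM2l //; case/andP: (V_bound s').
have -> : (1 - gamma)^-1 = 1 + gamma * (1 - gamma)^-1.
  by field; rewrite subr_eq0 gt_eqF.
rewrite lerD ?ler_wpM2l //; first by case/andP: (r_bound s a).
by apply: ge_sup => //; exists (\sum_(s' in Sr s a) pstar s a s' * V s').
Qed.

End Optimism.

Theorem lemma6 (R : realType) (S A : finType) (a0 : A) (d : nat)
  (phi : S -> A -> S -> 'cV[R]_d) (Sr : S -> A -> {set S})
  (r : S -> A -> R) (gamma : R) (thetastar : 'cV[R]_d) (Ltheta : R)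
  (T N : nat) (thetahat : nat -> 'cV[R]_d) (Sigma : nat -> 'M[R]_d)
  (beta : nat -> R) (tk : nat -> nat)
  (Vstar : S -> R) (Qstar : S -> A -> R) :
  (forall s a, (0 < #|Sr s a|)%N) ->
  (forall s a, 0 <= r s a <= 1) ->
  0 < gamma < 1 ->
  Num.sqrt ((thetastar^T *m thetastar) 0 0) <= Ltheta ->
  (forall t, (1 <= t <= T)%N -> posdef (Sigma t)) ->
  (forall t, (1 <= t <= T)%N ->
     wnorm (Sigma t) (thetahat t - thetastar) <= beta t) ->
  (forall s a, Qstar s a = r s a + gamma * \sum_(s' : S) mnl phi Sr thetastar s a s' * Vstar s') ->
  (forall s, Vstar s = vmax a0 Qstar s) ->
  (forall k, (1 <= tk k <= T)%N) ->
  forall k,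
    let Qk := devi Sr a0 r gamma
                (conf_set phi Sr (thetahat (tk k)) (Sigma (tk k)) (beta (tk k))) N in
    forall s a,
      ((1 - gamma)^-1 >= vmax a0 Qk s /\ vmax a0 Qk s >= Vstar s) /\
      ((1 - gamma)^-1 >= Qk s a /\ Qk s a >= Qstar s a).
Proof.
move=> Sr_neq0 r_bound /andP[gamma_gt0 gamma_lt1] _ Sigma_posdef dist_le
  Qstar_bellman Vstar_max tk_range k Qk s a.
have true_in_conf := mnl_in_conf_set phi Sr_neq0
  (Sigma_posdef _ (tk_range k)) (dist_le _ (tk_range k)).
have Qstar_bellman_Sr s' a' : Qstar s' a' = r s' a' + gamma *
    \sum_(s'' in Sr s' a') mnl phi Sr thetastar s' a' s'' * Vstar s''.
  by rewrite Qstar_bellman sum_mnl_reachable.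
have Qk_bounds := devi_optimistic r_bound (ltW gamma_gt0) gamma_lt1
  (fun p Pp => conf_set_stochastic Pp) true_in_conf Qstar_bellman_Sr Vstar_max N.
split; split.
- by apply: vmax_le => a'; case/andP: (Qk_bounds s a').
- by rewrite Vstar_max; apply: le_vmax2 => a'; case/andP: (Qk_bounds s a').
- by case/andP: (Qk_bounds s a).
- by case/andP: (Qk_bounds s a).
Qed.
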